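(* There is no automorphism $\varphi$ of $E$ of type 4 such that, for some basis $\{e_n\}_{n\in\mathbb{N}}$ of $L$, $\varphi(e_n)=-e_n+b_n$ for every $n\in\mathbb{N}$, where each $b_n$ is a nonzero scalar multiple of a monomial $e_{i_1}\cdots e_{i_m}$ in the generators.
   Context: $F$ is a field of characteristic zero, $L$ an infinite-dimensional $F$-vector space, $E$ its Grassmann algebra; for a basis $\{e_n\}$ of $L$, $E$ has basis $1$ and the monomials $e_{i_1}\cdots e_{i_m}$, $i_1<\cdots<i_m$, with $e_ie_j=-e_je_i$. An automorphism $\varphi$ of $E$ with $\varphi^2=\mathrm{id}$ is of type 4 if for every basis $\gamma$ of $L$ the set $\{n\mid \varphi(\gamma_n)=\pm\gamma_n\}$ is empty, i.e. no element $v$ of any basis $\gamma$ of $L$ satisfies $\varphi(v)=v$ or $\varphi(v)=-v$. *)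

(* The Grassmann algebra E of the vector space L
   with basis g_0, g_1, ... is modelled as {malg F[{fset nat}]}: the basis element
   indexed by the finite set S = {i_1 < ... < i_m} is the monomial g_{i_1}...g_{i_m}
   (S = fset0 gives 1), with the anticommutative product defined below. *)
From HB Require Import structures.
From mathcomp Require Import all_boot all_order all_algebra.
From mathcomp Require Import finmap.
From mathcomp.multinomials Require Import monalg.
Set Implicit Arguments.
Unset Strict Implicit.
Unset Printing Implicit Defensive.
Import GRing.Theory.
Local Open Scope fset_scope.
Local Open Scope ring_scope.

Section Grassmann.
Variable F : fieldType.

Definition Grass := {malg F[{fset nat}]}.

(* number of inversions when concatenating the increasing words S and T *)
Definition ginv (S T : {fset nat}) : nat :=
  sumn [seq count (fun t => t < s)%N (enum_fset T) | s <- enum_fset S].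

Definition gmul (a b : Grass) : Grass :=
  \sum_(S <- msupp a) \sum_(T <- msupp b)
     (if S `&` T == fset0
      then ((-1) ^+ ginv S T * a@_S * b@_T) *: << S `|` T >>
      else 0).

Definition gone : Grass := << fset0 >>.

Definition ggen (i : nat) : Grass := << [fset i] >>.

Definition inL (v : Grass) : Prop :=
  exists (s : seq nat) (c : nat -> F), v = \sum_(i <- s) c i *: ggen i.

Definition is_basisL (g : nat -> Grass) : Prop :=
  [/\ forall n, inL (g n),
      (forall (s : seq nat) (c : nat -> F), uniq s ->
         \sum_(i <- s) c i *: g i = 0 -> forall i, i \in s -> c i = 0) &
      (forall v, inL v ->
         exists (s : seq nat) (c : nat -> F), v = \sum_(i <- s) c i *: g i)].

Definition is_autE (phi : Grass -> Grass) : Prop :=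
  [/\ forall (c : F) (a b : Grass), phi (c *: a + b) = c *: phi a + phi b,
      phi gone = gone,
      forall a b, phi (gmul a b) = gmul (phi a) (phi b) &
      bijective phi].

Definition type4 (phi : Grass -> Grass) : Prop :=
  [/\ is_autE phi,
      forall a, phi (phi a) = a &
      forall g : nat -> Grass, is_basisL g ->
        forall n, phi (g n) <> g n /\ phi (g n) <> - g n].

Definition gmonom (e : nat -> Grass) (s : seq nat) : Grass :=
  foldr (fun i acc => gmul (e i) acc) gone s.

End Grassmann.

(* Conjugating phi by the substitution g_i |-> e_i (an automorphism of E, since
   e is a basis of L) turns the images of the basis vectors into
   X_n = -g_n + c_n g_{S_n}.  Involutivity forces phi to fix the monomials b_n,
   so X_{i_1} ... X_{i_m} = g_{S_n} along S_n = {i_1 < ... < i_m}; its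
   lowest-degree part is (-1)^m g_{S_n}, hence every |S_n| is even unless some
   S_n = {j} is a singleton, in which case X_j = g_j and e_j is fixed, against
   type 4.  If all |S_n| are even, take k above S_n: in X_n X_k + X_k X_n = 0
   the coefficient of g_{S_n + {k}} is -2 c_n unless n is not in S_k and
   {n} + S_k = S_n + {k}.  With j in S_0 - {0} and k large, n = 0 forces j to
   lie in S_k while n = j forbids it. *)

From HB Require Import structures.
From mathcomp Require Import all_boot all_order all_algebra.
From mathcomp Require Import finmap.
From mathcomp.multinomials Require Import monalg.
From mathcomp Require Import ring zify.
From Stdlib Require Import Classical ClassicalEpsilon.
Import GRing.Theory.
Local Open Scope fset_scope.
Local Open Scope ring_scope.

Lemma perm_enum_fsetU {K : choiceType} {S T : {fset K}} : [disjoint S & T] ->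
  perm_eq (enum_fset (S `|` T)) (enum_fset S ++ enum_fset T).
Proof.
move=> dST; apply: uniq_perm => [||x]; rewrite ?fset_uniq ?mem_cat ?in_fsetU //.
rewrite cat_uniq !fset_uniq andbT /=; apply/hasPn => x /= xT.
by apply/negP => xS; move/fdisjointP: dST => /(_ x xS); rewrite xT.
Qed.

Lemma ginvUl (S T U : {fset nat}) : [disjoint S & T] ->
  ginv (S `|` T) U = (ginv S U + ginv T U)%N.
Proof.
by move=> dST; rewrite /ginv (perm_sumn (perm_map _ (perm_enum_fsetU dST))) map_cat sumn_cat.
Qed.

Lemma ginvUr (S T U : {fset nat}) : [disjoint T & U] ->
  ginv S (T `|` U) = (ginv S T + ginv S U)%N.
Proof.
move=> dTU; rewrite /ginv; elim: (enum_fset S) => //= x s ->.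
by rewrite (permP (perm_enum_fsetU dTU)) count_cat addnACA.
Qed.

(** * The exterior product *)

Lemma ginv0r (S : {fset nat}) : ginv S fset0 = 0%N.
Proof. by rewrite /ginv; elim: (enum_fset S). Qed.

(* gmul is locked: otherwise rewriting with big-operator lemmas matches and
   unfolds the sum defining it. *)
Fact wedge_key : unit. Proof. by []. Qed.
Definition wedge {F : fieldType} : Grass F -> Grass F -> Grass F :=
  locked_with wedge_key (@gmul F).
Notation "a *w b" := (wedge a b) (at level 40, left associativity).

Lemma gmul_wedge (F : fieldType) : @gmul F = wedge.
Proof. by rewrite /wedge unlock. Qed.

Section GrassmannProduct.
Context {F : fieldType}.
Local Notation G := (Grass F).
Implicit Types (a b c : G) (S T U : {fset nat}).

Definition gmul_basis S T : G :=
  if [disjoint S & T]%fset then (-1) ^+ ginv S T *: << S `|` T >> else 0.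

Lemma wedgeE a b : a *w b =
  \sum_(S <- msupp a) \sum_(T <- msupp b) (a@_S * b@_T) *: gmul_basis S T.
Proof.
rewrite -gmul_wedge; apply: eq_bigr => S _; apply: eq_bigr => T _.
rewrite /gmul_basis -fsetI_eq0; case: eqP => _; last by rewrite scaler0.
by rewrite scalerA -mulrA mulrC.
Qed.

Lemma wedgeEw {dA dB : {fset {fset nat}}} {a b} : msupp a `<=` dA -> msupp b `<=` dB ->
  a *w b = \sum_(S <- dA) \sum_(T <- dB) (a@_S * b@_T) *: gmul_basis S T.
Proof.
move=> sA sB; rewrite wedgeE (big_fset_incl _ sA); last first.
  by move=> S _ /mcoeff_outdom ->; rewrite big1 // => T _; rewrite mul0r scale0r.
apply: eq_bigr => S _; apply: (big_fset_incl _ sB) => T _ /mcoeff_outdom ->.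
by rewrite mulr0 scale0r.
Qed.

Lemma wedgeDl a a' b : (a + a') *w b = a *w b + a' *w b.
Proof.
have sD := msuppD_le a a'; have sA := fsubsetUl (msupp a) (msupp a').
have sA' := fsubsetUr (msupp a) (msupp a'); have sB := fsubset_refl (msupp b).
rewrite (wedgeEw sD sB) (wedgeEw sA sB) (wedgeEw sA' sB) -big_split.
apply: eq_bigr => S _; rewrite -big_split; apply: eq_bigr => T _.
by rewrite mcoeffD mulrDl scalerDl.
Qed.

Lemma wedgeDr a b b' : a *w (b + b') = a *w b + a *w b'.
Proof.
have sD := msuppD_le b b'; have sB := fsubsetUl (msupp b) (msupp b').
have sB' := fsubsetUr (msupp b) (msupp b'); have sA := fsubset_refl (msupp a).
rewrite (wedgeEw sA sD) (wedgeEw sA sB) (wedgeEw sA sB') -big_split.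
apply: eq_bigr => S _; rewrite -big_split; apply: eq_bigr => T _.
by rewrite mcoeffD mulrDr scalerDl.
Qed.

Lemma wedgeZl k a b : (k *: a) *w b = k *: (a *w b).
Proof.
rewrite (wedgeEw (msuppZ_le k a) (fsubset_refl _)) wedgeE scaler_sumr.
apply: eq_bigr => S _; rewrite scaler_sumr; apply: eq_bigr => T _.
by rewrite mcoeffZ scalerA mulrA.
Qed.

Lemma wedgeZr k a b : a *w (k *: b) = k *: (a *w b).
Proof.
rewrite (wedgeEw (fsubset_refl _) (msuppZ_le k b)) wedgeE scaler_sumr.
apply: eq_bigr => S _; rewrite scaler_sumr; apply: eq_bigr => T _.
by rewrite mcoeffZ scalerA mulrCA.
Qed.

Lemma wedge0l b : 0 *w b = 0.
Proof. by rewrite -[0 in LHS](scale0r (0 : G)) wedgeZl scale0r. Qed.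

Lemma wedge0r a : a *w 0 = 0.
Proof. by rewrite -[0 in LHS](scale0r (0 : G)) wedgeZr scale0r. Qed.

Lemma wedgeNl a b : (- a) *w b = - (a *w b).
Proof. by rewrite -[- a]scaleN1r wedgeZl scaleN1r. Qed.

Lemma wedge_suml (I : Type) (r : seq I) (P : pred I) (f : I -> G) b :
  (\sum_(i <- r | P i) f i) *w b = \sum_(i <- r | P i) f i *w b.
Proof. exact: (big_morph (wedge^~ b) (fun a a' => wedgeDl a a' b) (wedge0l b)). Qed.

Lemma wedge_sumr (I : Type) (r : seq I) (P : pred I) (f : I -> G) a :
  a *w (\sum_(i <- r | P i) f i) = \sum_(i <- r | P i) a *w f i.
Proof. exact: (big_morph (wedge a) (wedgeDr a) (wedge0r a)). Qed.

Lemma monalgZE a : a = \sum_(S <- msupp a) a@_S *: << S >>.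
Proof.
rewrite {1}(monalgE a); apply: eq_bigr => S _.
by apply/malgP => U; rewrite mcoeffZ 2!mcoeffU mulr_natr.
Qed.

Lemma wedgeUU S T : << S >> *w << T >> = gmul_basis S T.
Proof. by rewrite wedgeE !msuppU oner_eq0 !big_seq_fset1 !mcoeffUU mul1r scale1r. Qed.

Lemma gmul_basisA S T U : gmul_basis S T *w << U >> = << S >> *w gmul_basis T U.
Proof.
rewrite /gmul_basis.
have [dST|nST] := boolP [disjoint S & T]%fset.
  have [dTU|nTU] := boolP [disjoint T & U]%fset; last first.
    by rewrite wedge0r wedgeZl wedgeUU /gmul_basis fdisjointUX (negbTE nTU) andbF scaler0.
  rewrite wedgeZl wedgeZr !wedgeUU /gmul_basis fdisjointUX fdisjointXU dST dTU andbT.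
  case: [disjoint S & U]%fset; last by rewrite !scaler0.
  rewrite !scalerA -!exprD fsetUA (ginvUl _ _ U dST) (ginvUr S _ _ dTU).
  by rewrite [in RHS]addnC -addnA.
rewrite wedge0l; case: [disjoint T & U]%fset; last by rewrite wedge0r.
by rewrite wedgeZr wedgeUU /gmul_basis fdisjointXU (negbTE nST) scaler0.
Qed.

Lemma wedgeA a b c : (a *w b) *w c = a *w (b *w c).
Proof.
have wedgeUUA S T : (<< S >> *w << T >>) *w c = << S >> *w (<< T >> *w c).
  rewrite (monalgZE c) !wedge_sumr; apply: eq_bigr => U _.
  by rewrite !wedgeZr wedgeUU gmul_basisA -wedgeUU.
have wedgeUA S : (<< S >> *w b) *w c = << S >> *w (b *w c).
  rewrite (monalgZE b) !(wedge_suml, wedge_sumr); apply: eq_bigr => T _.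
  by rewrite [in LHS]wedgeZr [in RHS]wedgeZl [in LHS]wedgeZl [in RHS]wedgeZr wedgeUUA.
rewrite (monalgZE a) !wedge_suml; apply: eq_bigr => S _.
by rewrite [in RHS]wedgeZl [in LHS]wedgeZl [in LHS]wedgeZl wedgeUA.
Qed.

Lemma wedge1l a : gone F *w a = a.
Proof.
rewrite [in RHS](monalgZE a) {1}(monalgZE a) wedge_sumr; apply: eq_bigr => S _.
by rewrite wedgeZr wedgeUU /gmul_basis fdisjoint0X expr0 scale1r fset0U.
Qed.

Lemma wedge1r a : a *w gone F = a.
Proof.
rewrite [in RHS](monalgZE a) {1}(monalgZE a) wedge_suml; apply: eq_bigr => S _.
by rewrite wedgeZl wedgeUU /gmul_basis fdisjointX0 ginv0r expr0 scale1r fsetU0.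
Qed.

Lemma ggen_anticomm i j : ggen F i *w ggen F j = - (ggen F j *w ggen F i).
Proof.
rewrite !wedgeUU /gmul_basis !fdisjoint1X !in_fset1 eq_sym.
have [->|nij] := eqVneq j i; first by rewrite oppr0.
rewrite fsetUC /ginv -!fset_seq1 /= !addn0.
have -> : (-1) ^+ (j < i)%N = - (-1) ^+ (i < j)%N :> F.
  by case: (ltngtP i j) nij => // _ _; rewrite ?expr0 ?expr1 ?opprK.
by rewrite scaleNr.
Qed.

Lemma inL_anticomm {v w : G} : inL v -> inL w -> v *w w = - (w *w v).
Proof.
move=> [s [c ->]] [t [d ->]]; rewrite 2!wedge_suml -sumrN.
under eq_bigr => i _ do rewrite wedgeZl wedge_sumr scaler_sumr.
under [RHS]eq_bigr => j _ do rewrite wedgeZl wedge_sumr scaler_sumr -sumrN.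
rewrite exchange_big; apply: eq_bigr => i _; apply: eq_bigr => j _.
by rewrite !wedgeZr ggen_anticomm !scalerN !scalerA mulrC.
Qed.

Lemma inL_wedge_self {v : G} : (2%:R : F) != 0 -> inL v -> v *w v = 0.
Proof.
move=> two Lv; apply: (scalerI two).
by rewrite scaler0 scaler_nat mulr2n {1}(inL_anticomm Lv Lv) addNr.
Qed.
End GrassmannProduct.

Arguments gmul_basis : clear implicits.

(** * Monomials in vectors of L *)

Fixpoint inversions (s : seq nat) : nat :=
  if s is x :: s' then (count (fun y => (y < x)%N) s' + inversions s')%N else 0%N.

Lemma inversions_cat s t : inversions (s ++ t) =
  (inversions s + inversions t + sumn [seq count (fun y => (y < x)%N) t | x <- s])%N.
Proof. by elim: s => [|x s IH] /=; rewrite ?add0n ?addn0 // IH count_cat; lia. Qed.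

Lemma count_ltn_sorted x s : path ltn x s -> count (fun y => (y < x)%N) s = 0%N.
Proof.
move=> /(order_path_min ltn_trans) /allP gt_x.
by apply/eqP; rewrite -leqn0 leqNgt -has_count; apply/hasPn => y /gt_x /ltnW; rewrite leqNgt.
Qed.

Lemma inversions_sorted s : sorted ltn s -> inversions s = 0%N.
Proof.
elim: s => //= x s IH xs; rewrite IH ?(path_sorted xs) // addn0.
exact: count_ltn_sorted.
Qed.

Lemma ginv1l i (T : {fset nat}) : ginv [fset i] T = count (fun t => (t < i)%N) (enum_fset T).
Proof. by rewrite /ginv -fset_seq1 /= addn0. Qed.

Lemma ginv1r (S : {fset nat}) k : ginv S [fset k] = count (fun s => (k < s)%N) (enum_fset S).
Proof.
rewrite /ginv -fset_seq1; elim: (enum_fset S) => //= s l ->.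
by rewrite addn0.
Qed.

Lemma sort_leq_min j t : all (leq j) t -> sort leq (j :: t) = j :: sort leq t.
Proof.
move=> jt; apply: (sorted_eq leq_trans anti_leq); first exact: (sort_sorted leq_total).
  by rewrite /= path_min_sorted ?all_sort // sort_sorted //; exact: leq_total.
by rewrite perm_sort perm_cons perm_sym perm_sort.
Qed.

Lemma sorted_ltn_sort_leq {s} : uniq s -> sorted ltn (sort leq s).
Proof.
by move=> us; rewrite ltn_sorted_uniq_leq sort_uniq us sort_sorted //; exact: leq_total.
Qed.

Section Monomials.
Context {F : fieldType}.
Local Notation G := (Grass F).
Implicit Types (w : nat -> G) (a b : G) (S T : {fset nat}).

Lemma gmonom_cons w i s : gmonom w (i :: s) = w i *w gmonom w s.
Proof. by rewrite /= gmul_wedge. Qed.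

Lemma gmonom_cat w s t : gmonom w (s ++ t) = gmonom w s *w gmonom w t.
Proof.
elim: s => [|i s IH]; first by rewrite wedge1l.
by rewrite cat_cons !gmonom_cons IH wedgeA.
Qed.

Lemma eq_gmonom w w' s : w =1 w' -> gmonom w s = gmonom w' s.
Proof. by move=> ww'; elim: s => [|i s IH]; rewrite ?gmonom_cons ?IH ?ww'. Qed.

Lemma gmonom_morph (chi : G -> G) {w s} : {morph chi : a b / a *w b} ->
  chi (gone F) = gone F -> chi (gmonom w s) = gmonom (chi \o w) s.
Proof.
move=> chiM chi1; elim: s => [|i s IH]; first exact: chi1.
by rewrite !gmonom_cons chiM IH.
Qed.

Lemma gmonom_ggen s : sorted ltn s -> gmonom (ggen F) s = << seq_fset tt s >>.
Proof.
elim: s => [|i s IH] si.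
  by congr << _ >>; apply/fsetP => x; rewrite seq_fsetE inE.
have i_notin_s : i \notin s by move: si; rewrite ltn_sorted_uniq_leq => /andP[/andP[]].
rewrite gmonom_cons IH ?(path_sorted si) // wedgeUU /gmul_basis fdisjoint1X seq_fsetE.
rewrite i_notin_s.
rewrite ginv1l (eq_in_count (a2 := pred0)) ?count_pred0 ?expr0 ?scale1r; last first.
  move=> x; rewrite seq_fsetE => xs; apply/negbTE; rewrite -leqNgt ltnW //.
  exact: (allP (order_path_min ltn_trans si)).
by congr << _ >>; apply/fsetP => x; rewrite in_fsetU in_fset1 !seq_fsetE inE.
Qed.

Definition gmonom_set w S := gmonom w (sort leq (enum_fset S)).

Lemma gmonom_set_seq w s : sorted ltn s -> gmonom_set w (seq_fset tt s) = gmonom w s.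
Proof.
rewrite ltn_sorted_uniq_leq => /andP[us s_leq].
rewrite /gmonom_set; congr gmonom.
apply: (sorted_eq leq_trans anti_leq (sort_sorted leq_total _) s_leq).
rewrite perm_sort; apply: uniq_perm => // [|x]; first exact: fset_uniq.
by rewrite seq_fsetE.
Qed.

Definition gsubst w a : G := \sum_(S <- msupp a) a@_S *: gmonom_set w S.

Lemma gsubstEw w {d : {fset {fset nat}}} {a} : msupp a `<=` d ->
  gsubst w a = \sum_(S <- d) a@_S *: gmonom_set w S.
Proof.
move=> sd; rewrite /gsubst (big_fset_incl _ sd) // => S _ /mcoeff_outdom ->.
by rewrite scale0r.
Qed.

Lemma gsubstD w a b : gsubst w (a + b) = gsubst w a + gsubst w b.
Proof.
have sD := msuppD_le a b; have sA := fsubsetUl (msupp a) (msupp b).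
have sB := fsubsetUr (msupp a) (msupp b).
rewrite (gsubstEw w sD) (gsubstEw w sA) (gsubstEw w sB) -big_split.
by apply: eq_bigr => S _; rewrite mcoeffD scalerDl.
Qed.

Lemma gsubstZ w k a : gsubst w (k *: a) = k *: gsubst w a.
Proof.
rewrite (gsubstEw w (msuppZ_le k a)) /gsubst scaler_sumr.
by apply: eq_bigr => S _; rewrite mcoeffZ scalerA.
Qed.

Lemma gsubst0 w : gsubst w 0 = 0.
Proof. by rewrite -[0 in LHS](scale0r (0 : G)) gsubstZ scale0r. Qed.

Lemma gsubstN w a : gsubst w (- a) = - gsubst w a.
Proof. by rewrite -[- a]scaleN1r gsubstZ scaleN1r. Qed.

Lemma gsubst_sum w (I : Type) (r : seq I) (P : pred I) (f : I -> G) :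
  gsubst w (\sum_(i <- r | P i) f i) = \sum_(i <- r | P i) gsubst w (f i).
Proof. exact: (big_morph (gsubst w) (gsubstD w) (gsubst0 w)). Qed.

Lemma gsubstU w S : gsubst w << S >> = gmonom_set w S.
Proof. by rewrite /gsubst msuppU oner_eq0 big_seq_fset1 mcoeffUU scale1r. Qed.

Lemma gsubst_ggen w i : gsubst w (ggen F i) = w i.
Proof. by rewrite gsubstU /gmonom_set -fset_seq1 [sort _ _]/= gmonom_cons wedge1r. Qed.

Lemma gsubst_gone w : gsubst w (gone F) = gone F.
Proof. by rewrite gsubstU. Qed.

Section FamilyInL.
Hypothesis two : (2%:R : F) != 0.
Variable w : nat -> G.
Hypothesis w_inL : forall i, inL (w i).
Local Notation M := (gmonom w).

Lemma w_anticomm i j a : w i *w (w j *w a) = - (w j *w (w i *w a)).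
Proof. by rewrite -!wedgeA (inL_anticomm (w_inL i) (w_inL j)) wedgeNl. Qed.

Lemma w_wedge_self i a : w i *w (w i *w a) = 0.
Proof. by rewrite -wedgeA (inL_wedge_self two (w_inL i)) wedge0l. Qed.

Lemma wedge_gmonom_mem i u : i \in u -> w i *w M u = 0.
Proof.
elim: u => [|j u IH]; first by [].
rewrite inE gmonom_cons => /orP[/eqP->|iu]; first exact: w_wedge_self.
by rewrite w_anticomm IH // wedge0r oppr0.
Qed.

Lemma wedge_gmonom_notin i u : sorted ltn u -> i \notin u ->
  w i *w M u = (-1) ^+ count (fun t => (t < i)%N) u *: M (sort leq (i :: u)).
Proof.
elim: u => [|j u IH] su.
  by rewrite expr0 scale1r (_ : sort leq [:: i] = [:: i]) // gmonom_cons.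
rewrite inE negb_or => /andP[ij iu].
have ju : all (ltn j) u := order_path_min ltn_trans su.
case: (ltngtP i j) => [lt_ij|lt_ji|eq_ij]; last by rewrite eq_ij eqxx in ij.
  have iju : path ltn i (j :: u) by rewrite /= lt_ij.
  rewrite count_ltn_sorted // expr0 scale1r (sorted_sort leq_trans) ?[RHS]gmonom_cons //.
  by rewrite /=; apply: sub_path iju => x y /ltnW.
rewrite gmonom_cons w_anticomm IH ?(path_sorted su) // wedgeZr.
have -> : sort leq [:: i, j & u] = j :: sort leq (i :: u).
  rewrite -sort_leq_min; last by rewrite /= (ltnW lt_ji); apply: sub_all ju => x /ltnW.
  apply/perm_sortP; [exact: leq_total | exact: leq_trans | exact: anti_leq |].
  by rewrite (perm_catCA [:: i] [:: j] u).
by rewrite [in RHS]gmonom_cons [count _ (j :: u)]/= lt_ji add1n exprS mulN1r scaleNr.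
Qed.

Lemma gmonom_sort s :
  M s = if uniq s then (-1) ^+ inversions s *: M (sort leq s) else 0.
Proof.
elim: s => [|i s IH]; first by rewrite expr0 scale1r.
rewrite gmonom_cons IH cons_uniq; have [us|] := boolP (uniq s); last by rewrite wedge0r andbF.
rewrite wedgeZr andbT; have [is_|nis] := boolP (i \in s).
  by rewrite wedge_gmonom_mem ?scaler0 // mem_sort.
rewrite (wedge_gmonom_notin i _ (sorted_ltn_sort_leq us)) ?mem_sort; last by [].
rewrite scalerA -exprD.
have /permP-> : perm_eq (sort leq s) s by rewrite perm_sort.
have -> : sort leq (i :: sort leq s) = sort leq (i :: s).
  by apply/perm_sortP; [exact: leq_total | exact: leq_trans | exact: anti_leq |
    rewrite perm_cons perm_sort].
by rewrite [inversions _]/= addnC.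
Qed.

Lemma wedge_gmonom_set S T : gmonom_set w S *w gmonom_set w T =
  if [disjoint S & T]%fset then (-1) ^+ ginv S T *: gmonom_set w (S `|` T) else 0.
Proof.
have sortS : perm_eq (sort leq (enum_fset S)) (enum_fset S) by rewrite perm_sort.
have sortT : perm_eq (sort leq (enum_fset T)) (enum_fset T) by rewrite perm_sort.
have uniqE : uniq (sort leq (enum_fset S) ++ sort leq (enum_fset T)) = [disjoint S & T]%fset.
  rewrite cat_uniq !sort_uniq !fset_uniq /= andbT fdisjoint_sym.
  apply/hasPn/fdisjointP => [dST x xT|dTS x]; last by rewrite !mem_sort => /dTS.
  by have := dST x; rewrite !mem_sort xT; apply.
rewrite /gmonom_set -gmonom_cat [LHS]gmonom_sort uniqE.
have [dST|nST] := boolP [disjoint S & T]%fset; last by [].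
rewrite inversions_cat !inversions_sorted ?add0n; try exact/sorted_ltn_sort_leq/fset_uniq.
have -> : sumn [seq count (fun y => (y < x)%N) (sort leq (enum_fset T))
                 | x <- sort leq (enum_fset S)] = ginv S T.
  rewrite /ginv (perm_sumn (perm_map _ sortS)); congr sumn; apply: eq_map => x.
  exact: (permP sortT).
have -> // : sort leq (sort leq (enum_fset S) ++ sort leq (enum_fset T)) =
    sort leq (enum_fset (S `|` T)).
apply/perm_sortP; [exact: leq_total | exact: leq_trans | exact: anti_leq |].
apply: perm_trans (perm_cat sortS sortT) _; rewrite perm_sym; exact: perm_enum_fsetU.
Qed.

Lemma gsubst_basis S T : gsubst w (gmul_basis F S T) = gmonom_set w S *w gmonom_set w T.
Proof.
rewrite wedge_gmonom_set /gmul_basis.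
by have [_|_] := boolP [disjoint S & T]%fset; rewrite ?gsubstZ ?gsubstU ?gsubst0.
Qed.

Lemma gsubst_wedge a b : gsubst w (a *w b) = gsubst w a *w gsubst w b.
Proof.
rewrite wedgeE gsubst_sum [gsubst w a]/gsubst [gsubst w b]/gsubst wedge_suml.
apply: eq_bigr => S _; rewrite gsubst_sum wedgeZl wedge_sumr scaler_sumr.
by apply: eq_bigr => T _; rewrite gsubstZ wedgeZr scalerA gsubst_basis.
Qed.
End FamilyInL.
End Monomials.

(** * Substituting a basis of L for the generators *)

Section Regroup.
Context {F : fieldType} {V : lmodType F} {I : eqType}.
Implicit Types (v : I -> V) (s K : seq I).

Lemma sum_scale_regroup v (d : I -> F) {s K} : uniq K -> {subset s <= K} ->
  \sum_(k <- s) d k *: v k = \sum_(k <- K) (\sum_(k' <- s | k' == k) d k') *: v k.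
Proof.
move=> uK sK; under [RHS]eq_bigr => k _ do rewrite scaler_suml.
rewrite (exchange_big_dep xpredT) //=; apply: eq_big_seq => k' k's.
rewrite -big_filter (eq_filter (a2 := pred1 k')); last by move=> x; rewrite /= eq_sym.
by rewrite filter_pred1_uniq ?sK // big_seq1.
Qed.

Lemma sum_sum_scale_regroup v (a : I -> F) (r : seq I) (R : I -> seq I)
    (D : I -> I -> F) {K} :
  uniq K -> (forall l, l \in r -> {subset R l <= K}) ->
  \sum_(l <- r) a l *: \sum_(k <- R l) D l k *: v k =
  \sum_(k <- K) (\sum_(l <- r) a l * \sum_(k' <- R l | k' == k) D l k') *: v k.
Proof.
move=> uK sK; rewrite big_seq.
under eq_bigr => l rl do rewrite (sum_scale_regroup v (D l) uK (sK l rl)) scaler_sumr.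
rewrite -big_seq exchange_big; apply: eq_bigr => k _.
by rewrite scaler_suml; apply: eq_bigr => l _; rewrite scalerA.
Qed.

Lemma sum_scale_delta v K i : uniq K -> i \in K ->
  \sum_(k <- K) ((k == i)%:R : F) *: v k = v i.
Proof.
move=> uK iK; rewrite (bigD1_seq i) //= eqxx scale1r big1 ?addr0 // => k /negbTE ->.
by rewrite scale0r.
Qed.
End Regroup.

Section BasisSubstitution.
Context {F : fieldType}.
Local Notation G := (Grass F).

Lemma inL_ggen i : inL (ggen F i).
Proof. by exists [:: i], (fun _ => 1); rewrite big_seq1 scale1r. Qed.

Lemma gsubst_lcomb (w : nat -> G) (a : nat -> F) r :
  gsubst w (\sum_(l <- r) a l *: ggen F l) = \sum_(l <- r) a l *: w l.
Proof. by rewrite gsubst_sum; apply: eq_bigr => l _; rewrite gsubstZ gsubst_ggen. Qed.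

Lemma gsubst_dual_cancel (two : (2%:R : F) != 0) {w w' : nat -> G} :
  (forall l, inL (w' l)) -> (forall i, gsubst w' (w i) = ggen F i) ->
  cancel (gsubst w) (gsubst w').
Proof.
move=> w'_inL w'w a.
have gsubstU_cancel S : gsubst w' (gmonom_set w S) = << S >>.
  rewrite /gmonom_set (gmonom_morph _ (gsubst_wedge two _ w'_inL) (gsubst_gone w')).
  rewrite (eq_gmonom _ _ _ w'w) gmonom_ggen.
    by congr << _ >>; apply/fsetP => x; rewrite seq_fsetE mem_sort.
  exact/sorted_ltn_sort_leq/fset_uniq.
rewrite [RHS]monalgZE [gsubst w a]/gsubst gsubst_sum; apply: eq_bigr => S _.
by rewrite gsubstZ gsubstU_cancel.
Qed.

Lemma basis_dual {e : nat -> G} : is_basisL e ->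
  exists2 w : nat -> G, forall l, inL (w l) & forall i, gsubst w (e i) = ggen F i.
Proof.
case=> e_inL e_free e_span.
have [crd crdE] : exists crd : nat -> seq nat * (nat -> F),
    forall l, ggen F l = \sum_(k <- (crd l).1) (crd l).2 k *: e k.
  apply: (choice (fun l p => ggen F l = \sum_(k <- p.1) p.2 k *: e k)) => l.
  by have [r [d ->]] := e_span _ (inL_ggen l); exists (r, d).
pose w l := \sum_(k <- (crd l).1) (crd l).2 k *: ggen F k.
exists w => [l|i]; first by exists (crd l).1, (crd l).2.
have [r [a ea]] := e_inL i.
set K := undup (i :: flatten [seq (crd l).1 | l <- r]).
have uK : uniq K := undup_uniq _.
have iK : i \in K by rewrite mem_undup inE eqxx.
have subK l : l \in r -> {subset (crd l).1 <= K}.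
  move=> rl x xl; rewrite mem_undup inE; apply/orP; right.
  by apply/flattenP; exists (crd l).1 => //; apply: map_f.
pose C k := \sum_(l <- r) a l * \sum_(k' <- (crd l).1 | k' == k) (crd l).2 k'.
have regroup (v : nat -> G) :
    \sum_(l <- r) a l *: \sum_(k <- (crd l).1) (crd l).2 k *: v k = \sum_(k <- K) C k *: v k.
  exact: (sum_sum_scale_regroup v a r (fun l => (crd l).1) (fun l => (crd l).2) uK subK).
have C_delta k : k \in K -> C k = (k == i)%:R.
  have : \sum_(k <- K) (C k - (k == i)%:R) *: e k = 0.
    under eq_bigr => j _ do rewrite scalerBl.
    rewrite sumrB sum_scale_delta // -regroup ea; apply/eqP; rewrite subr_eq0; apply/eqP.
    by apply: eq_bigr => l _; rewrite [ggen F l]crdE.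
  move=> sum0 kK; apply/eqP; rewrite -subr_eq0; apply/eqP.
  exact: (e_free _ _ uK sum0 k kK).
rewrite ea gsubst_lcomb regroup big_seq.
under eq_bigr => k kK do rewrite C_delta //.
by rewrite -big_seq sum_scale_delta.
Qed.

Lemma gsubst_basis_inj (two : (2%:R : F) != 0) {e : nat -> G} :
  is_basisL e -> injective (gsubst e).
Proof.
move=> e_basis; have [w w_inL we] := basis_dual e_basis.
exact: can_inj (gsubst_dual_cancel two w_inL we).
Qed.
End BasisSubstitution.

(** * Coefficients and lowest-degree terms *)

Lemma cardfsU_disjoint (K : choiceType) (A B : {fset K}) :
  [disjoint A & B] -> #|` A `|` B| = (#|` A| + #|` B|)%N.
Proof. by rewrite -fsetI_eq0 -cardfsUI => /eqP->; rewrite cardfs0 addn0. Qed.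

Lemma card_seq_fset_sorted t : sorted ltn t -> #|` seq_fset tt t| = size t.
Proof. by rewrite ltn_sorted_uniq_leq size_seq_fset => /andP[/undup_id-> _]. Qed.

Lemma mcoeff_sum (K : choiceType) (R : zmodType) (I : Type) (r : seq I) (P : pred I)
    (f : I -> {malg R[K]}) k :
  (\sum_(i <- r | P i) f i)@_k = \sum_(i <- r | P i) (f i)@_k.
Proof. exact: raddf_sum. Qed.

Definition acomm {V : zmodType} (f : V -> V -> V) (a b : V) : V := f a b + f b a.

Section BilinearIdentities.
Context {R : comRingType} {V : lmodType R} {f : V -> V -> V}.
Hypotheses (fDl : forall a a' b, f (a + a') b = f a b + f a' b)
  (fDr : forall a b b', f a (b + b') = f a b + f a b')
  (fZl : forall k a b, f (k *: a) b = k *: f a b)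
  (fZr : forall k a b, f a (k *: b) = k *: f a b).

Lemma bilin_affine_shift g p m T (c e : R) :
  f (- g + c *: p) m + e *: f g T = f (- g + c *: p) (m - e *: T) + (e * c) *: f p T.
Proof.
have fNl a b : f (- a) b = - f a b by rewrite -scaleN1r fZl scaleN1r.
have fXT : f (- g + c *: p) T = - f g T + c *: f p T by rewrite fDl fNl fZl.
rewrite fDr -scaleNr fZr fXT scalerDr scalerN !scaleNr opprK scalerA.
by rewrite addrA addrNK.
Qed.

Lemma acomm_affine_coef {phi : V -> R} : {morph phi : u v / u + v} ->
    (forall k u, phi (k *: u) = k * phi u) -> forall a b p q (x y : R),
  phi (acomm f (- a + x *: p) (- b + y *: q)) =
  phi (acomm f a b) - y * phi (acomm f a q) - x * phi (acomm f p b)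
    + x * y * phi (acomm f p q).
Proof.
move=> phiD phiZ a b p q x y.
have phiN u : phi (- u) = - phi u by rewrite -scaleN1r phiZ mulN1r.
have fNl u v : f (- u) v = - f u v by rewrite -scaleN1r fZl scaleN1r.
have fNr u v : f u (- v) = - f u v by rewrite -scaleN1r fZr scaleN1r.
rewrite /acomm !(fDl, fDr, fNl, fNr, fZl, fZr, phiD, phiN, phiZ).
ring.
Qed.
End BilinearIdentities.

Section Degree.
Context {F : fieldType}.
Local Notation G := (Grass F).
Implicit Types (y z : G) (A B S T U : {fset nat}).

Lemma mcoeff_gmul_basis A B U : (gmul_basis F A B)@_U =
  if [disjoint A & B]%fset && (A `|` B == U) then (-1) ^+ ginv A B else 0.
Proof.
rewrite /gmul_basis; case: ifP => dAB /=; last by rewrite mcoeff0.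
by rewrite mcoeffZ mcoeffU; case: eqP; rewrite ?mulr1 ?mulr0.
Qed.

Lemma mcoeff_gmul_basis_card {A B U} :
  (#|` A| + #|` B|)%N != #|` U| -> (gmul_basis F A B)@_U = 0.
Proof.
move=> cardAB; rewrite mcoeff_gmul_basis; case: ifP => // /andP[dAB /eqP ABU].
by move: cardAB; rewrite -ABU cardfsU_disjoint ?eqxx.
Qed.

Lemma mcoeff_acommU_card A B U :
  (#|` A| + #|` B|)%N != #|` U| -> (acomm (@wedge F) << A >> << B >>)@_U = 0.
Proof.
move=> cardAB; have cardBA : (#|` B| + #|` A|)%N != #|` U| by rewrite addnC.
rewrite mcoeffD (wedgeUU A B) (wedgeUU B A).
(* Rewrites are confined to one summand: comparing distinct elements of Grass F
   by conversion is extremely slow. *)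
rewrite [X in X + _](mcoeff_gmul_basis_card cardAB).
by rewrite [X in _ + X](mcoeff_gmul_basis_card cardBA) addr0.
Qed.

Lemma mcoeff_acomm_ggenU_off {n T U} : ~~ ((n \notin T) && ([fset n] `|` T == U)) ->
  (acomm wedge (ggen F n) << T >>)@_U = 0.
Proof.
move=> nTU; have nTF : [disjoint [fset n] & T]%fset && ([fset n] `|` T == U) = false.
  by rewrite fdisjoint1X; apply/negbTE.
rewrite mcoeffD /ggen (wedgeUU [fset n] T) (wedgeUU T [fset n]).
rewrite [X in X + _]mcoeff_gmul_basis [X in _ + X]mcoeff_gmul_basis.
by rewrite (fdisjoint_sym T) (fsetUC T) nTF addr0.
Qed.

Lemma mcoeff_acommU_ggen_max {S k} : {in S, forall x, (x < k)%N} -> ~~ odd #|` S| ->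
  (acomm wedge << S >> (ggen F k))@_(S `|` [fset k]) = 2%:R.
Proof.
move=> S_lt_k even_S; have kS : k \notin S by apply/negP => /S_lt_k; rewrite ltnn.
rewrite mcoeffD /ggen (wedgeUU S [fset k]) (wedgeUU [fset k] S).
rewrite [X in X + _]mcoeff_gmul_basis [X in _ + X]mcoeff_gmul_basis.
rewrite ginv1l ginv1r (eq_in_count (a2 := pred0)) ?count_pred0; last first.
  by move=> x /S_lt_k /ltnW; rewrite leqNgt => /negbTE.
rewrite (eq_in_count (a2 := predT)) ?count_predT; last by move=> x /S_lt_k.
rewrite -[size (enum_fset _)]/(#|` S|) -[(-1) ^+ #|` S|]signr_odd (negbTE even_S).
by rewrite fdisjointX1 fdisjoint1X kS (fsetUC [fset k]) eqxx.
Qed.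

Definition vanish_below (d : nat) y := forall U, (#|` U| < d)%N -> y@_U = 0.

Lemma vanish_belowD d y z : vanish_below d y -> vanish_below d z -> vanish_below d (y + z).
Proof. by move=> hy hz U hU; rewrite mcoeffD hy // hz // addr0. Qed.

Lemma vanish_belowZ d k y : vanish_below d y -> vanish_below d (k *: y).
Proof. by move=> hy U hU; rewrite mcoeffZ hy // mulr0. Qed.

Lemma vanish_belowN d y : vanish_below d y -> vanish_below d (- y).
Proof. by move=> hy U hU; rewrite mcoeffN hy // oppr0. Qed.

Lemma vanish_belowW {d d' y} : (d' <= d)%N -> vanish_below d y -> vanish_below d' y.
Proof. by move=> d'd hy U hU; apply: hy; apply: leq_trans hU d'd. Qed.

Lemma vanish_belowU S : vanish_below #|` S| << S >>.
Proof. by move=> U hU; rewrite mcoeffU; case: eqP => [SU|]; rewrite ?SU ?ltnn in hU. Qed.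

Lemma vanish_below_ggen i : vanish_below 1 (ggen F i).
Proof. by rewrite -(cardfs1 i); exact: vanish_belowU. Qed.

Lemma vanish_below_wedge {p q y z} :
  vanish_below p y -> vanish_below q z -> vanish_below (p + q) (y *w z).
Proof.
move=> hy hz U hU; rewrite wedgeE mcoeff_sum big1 // => S _.
rewrite mcoeff_sum big1 // => T _; rewrite mcoeffZ.
have [Sp|pS] := ltnP #|` S| p; first by rewrite hy // !mul0r.
have [Tq|qT] := ltnP #|` T| q; first by rewrite (hz T) // mulr0 mul0r.
rewrite mcoeff_gmul_basis_card ?mulr0 //; apply: contraTneq hU => <-.
by rewrite -leqNgt leq_add.
Qed.
End Degree.

(** * Generators perturbed by monomials *)

Section PerturbedGenerators.
Context {F : fieldType}.
Local Notation G := (Grass F).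
Hypothesis two : (2%:R : F) != 0.
Context {c : nat -> F} {s : nat -> seq nat}.
Hypothesis c_neq0 : forall n, c n != 0.
Hypothesis s_sorted : forall n, sorted ltn (s n).
Hypothesis s_neq_nil : forall n, s n != [::].
Local Notation S n := (seq_fset tt (s n)).

Definition perturbed_gen n : G := - ggen F n + c n *: << S n >>.
Local Notation X := perturbed_gen.

Hypothesis X_monom : forall n, gmonom X (s n) = << S n >>.
Hypothesis X_acomm : forall n k, acomm wedge (X n) (X k) = 0.

Lemma perturbed_gen_fixed_singleton n : size (s n) = 1%N -> exists j, X j = ggen F j.
Proof.
move=> sn1; have := X_monom n; case: (s n) sn1 => [|j [|//]] // _.
rewrite gmonom_cons wedge1r => Xj; exists j; rewrite Xj.
by congr << _ >>; apply/fsetP => x; rewrite seq_fsetE !inE.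
Qed.
Lemma vanish_below_perturbed_gen n : vanish_below 1 (X n).
Proof.
apply: vanish_belowD; first exact/vanish_belowN/vanish_below_ggen.
apply/vanish_belowZ/(vanish_belowW _ (vanish_belowU _)).
by rewrite card_seq_fset_sorted // lt0n size_eq0.
Qed.

Lemma gmonom_perturbed_lowest {t} : sorted ltn t -> {in t, forall i, (2 <= size (s i))%N} ->
  vanish_below (size t).+1 (gmonom X t - (-1) ^+ size t *: << seq_fset tt t >>).
Proof.
elim: t => [|a t IH] sat s2.
  have -> : seq_fset tt [::] = fset0 :> {fset nat} by apply/fsetP => x; rewrite seq_fsetE.
  by rewrite expr0 scale1r subrr => U _; rewrite mcoeff0.
have t_sorted := path_sorted sat.
have t2 : {in t, forall i, (2 <= size (s i))%N} by move=> i it; apply: s2; rewrite inE it orbT.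
have gT : << seq_fset tt (a :: t) >> = ggen F a *w << seq_fset tt t >>.
  by rewrite -gmonom_ggen // gmonom_cons gmonom_ggen.
rewrite gmonom_cons gT [size _]/= exprS mulN1r scaleNr opprK [X a]/perturbed_gen.
rewrite (bilin_affine_shift wedgeDl wedgeDr wedgeZl wedgeZr).
apply: vanish_belowD.
  exact: (@vanish_below_wedge _ 1 (size t).+1 _ _ (vanish_below_perturbed_gen a) (IH t_sorted t2)).
apply/vanish_belowZ/(vanish_belowW _ (vanish_below_wedge (vanish_belowU _) (vanish_belowU _))).
by rewrite !card_seq_fset_sorted // -add2n leq_add2r s2 // mem_head.
Qed.

Lemma size_perturbed_even n : (forall i, (2 <= size (s i))%N) -> ~~ odd (size (s n)).
Proof.
move=> s2; have := gmonom_perturbed_lowest (s_sorted n) (fun i _ => s2 i).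
rewrite X_monom => /(_ (S n)); rewrite card_seq_fset_sorted // ltnSn => /(_ isT).
rewrite mcoeffB mcoeffZ mcoeffUU mulr1 -signr_odd.
case: (odd _) => //; rewrite expr1 opprK => /eqP.
by rewrite -mulr2n -mulr_natl mulr1 (negbTE two).
Qed.

Lemma perturbed_acomm_support n k : {in S n, forall x, (x < k)%N} -> ~~ odd (size (s n)) ->
    (2 <= size (s n))%N -> (2 <= size (s k))%N ->
  (n \notin S k) && ([fset n] `|` S k == S n `|` [fset k]).
Proof.
move=> Sn_lt_k even_n n2 k2; apply/negPn/negP => nkU.
set U := S n `|` [fset k].
have cardU : #|` U| = (size (s n)).+1.
  have kSn : k \notin S n by apply/negP => /Sn_lt_k; rewrite ltnn.
  by rewrite cardfsU_disjoint ?fdisjointX1 // cardfs1 card_seq_fset_sorted // addn1.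
have gg : (acomm wedge (ggen F n) (ggen F k))@_U = 0.
  by rewrite /ggen mcoeff_acommU_card // !cardfs1 cardU; lia.
have PP : (acomm (@wedge F) << S n >> << S k >>)@_U = 0.
  by rewrite mcoeff_acommU_card // !card_seq_fset_sorted // cardU; lia.
have gP := mcoeff_acomm_ggenU_off nkU.
have even_Sn : ~~ odd #|` S n| by rewrite card_seq_fset_sorted.
have Pg := mcoeff_acommU_ggen_max Sn_lt_k even_Sn.
have := acomm_affine_coef wedgeDl wedgeDr wedgeZl wedgeZr (mcoeffD U)
  (fun k a => mcoeffZ k a U) (ggen F n) (ggen F k) << S n >> << S k >> (c n) (c k).
rewrite -[acomm _ _ _]/(acomm wedge (X n) (X k)) X_acomm mcoeff0.
rewrite [X in _ = X - _ - _ + _]gg [X in _ = _ - _ * X - _ + _]gP.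
rewrite [X in _ = _ - _ - _ * X + _]Pg [X in _ = _ + _ * X]PP.
rewrite !(mulr0, subr0, oppr0, sub0r, addr0) => /eqP; rewrite eq_sym oppr_eq0 mulf_eq0.
by rewrite (negbTE (c_neq0 n)) (negbTE two).
Qed.

Lemma perturbed_gen_fixed : exists j, X j = ggen F j.
Proof.
have [[n /perturbed_gen_fixed_singleton //]|no1] := classic (exists n, size (s n) = 1%N).
have s2 i : (2 <= size (s i))%N.
  case si : (s i) (s_neq_nil i) => [|x [|y l]] // _.
  by case: no1; exists i; rewrite si.
have even i := size_perturbed_even i s2.
have [j j0 js0] : exists2 j, j != 0%N & j \in s 0%N.
  case s0 : (s 0%N) (s2 0%N) (s_sorted 0%N) => [|x [|y l]] // _ /andP[xy _].
  have [x0|x0] := eqVneq x 0%N; last by exists x; rewrite ?mem_head.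
  by exists y; rewrite ?inE ?eqxx ?orbT // -lt0n -x0.
set k := (\max_(x <- s 0%N ++ s j) x).+1.
have lt_k x : x \in s 0%N ++ s j -> (x < k)%N.
  by move=> x_in; rewrite ltnS; exact: (leq_bigmax_seq (F := fun x => x) x x_in isT).
have /andP[_ /eqP U0] : (0 \notin S k) && ([fset 0%N] `|` S k == S 0%N `|` [fset k]).
  apply: perturbed_acomm_support => // x; rewrite seq_fsetE => x0.
  by rewrite lt_k // mem_cat x0.
have /andP[jSk _] : (j \notin S k) && ([fset j] `|` S k == S j `|` [fset k]).
  apply: perturbed_acomm_support => // x; rewrite seq_fsetE => xj.
  by rewrite lt_k // mem_cat xj orbT.
have : j \in [fset 0%N] `|` S k by rewrite U0 in_fsetU seq_fsetE js0.
by rewrite in_fsetU in_fset1 (negbTE j0) (negbTE jSk).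
Qed.
End PerturbedGenerators.

Arguments perturbed_gen {F} c s n.

(** * Pulling the automorphism back along the basis *)

Section LinearFun.
Context {R : pzRingType} {U V : lmodType R} {f : U -> V}.
Hypothesis f_lin : forall k a b, f (k *: a + b) = k *: f a + f b.

Lemma linfun0 : f 0 = 0.
Proof.
have := f_lin 1 0 0; rewrite !scale1r addr0 => f00.
by apply: (addrI (f 0)); rewrite addr0 -f00.
Qed.

Lemma linfunZ k a : f (k *: a) = k *: f a.
Proof. by rewrite -[k *: a]addr0 f_lin linfun0 addr0. Qed.

Lemma linfunD a b : f (a + b) = f a + f b.
Proof. by rewrite -[a]scale1r f_lin !scale1r. Qed.

Lemma linfunN a : f (- a) = - f a.
Proof. by rewrite -scaleN1r linfunZ scaleN1r. Qed.
End LinearFun.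

Lemma involution_affine_fixed {R : fieldType} {V : lmodType R} {f : V -> V} {x m : V} {c : R} :
  (forall k a b, f (k *: a + b) = k *: f a + f b) -> f (f x) = x ->
  f x = - x + c *: m -> c != 0 -> f m = m.
Proof.
move=> f_lin fK fx c0; move: fK.
rewrite fx (linfunD f_lin) (linfunN f_lin) (linfunZ f_lin) fx => fm.
apply: (scalerI c0); apply: (addrI (- (- x + c *: m))).
by rewrite fm opprD opprK subrK.
Qed.

Section Pullback.
Context {F : fieldType}.
Local Notation G := (Grass F).
Hypothesis two : (2%:R : F) != 0.
Context {phi : G -> G}.
Hypothesis phi_lin : forall k a b, phi (k *: a + b) = k *: phi a + phi b.
Hypothesis phi_wedge : {morph phi : a b / a *w b}.
Hypothesis phi_gone : phi (gone F) = gone F.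
Hypothesis phiK : forall a, phi (phi a) = a.
Context {e : nat -> G}.
Hypothesis e_basis : is_basisL e.
Context {c : nat -> F} {s : nat -> seq nat}.
Hypothesis c_neq0 : forall n, c n != 0.
Hypothesis s_sorted : forall n, sorted ltn (s n).
Hypothesis phi_e : forall n, phi (e n) = - e n + c n *: gmonom e (s n).
Local Notation X := (perturbed_gen c s).

Lemma e_inL n : inL (e n).
Proof. by case: e_basis. Qed.

Lemma gsubst_perturbed_gen n : gsubst e (X n) = phi (e n).
Proof.
rewrite phi_e /perturbed_gen gsubstD gsubstN gsubstZ gsubst_ggen gsubstU.
by rewrite gmonom_set_seq.
Qed.

Lemma acomm_pullback {x y n k} :
  gsubst e x = phi (e n) -> gsubst e y = phi (e k) -> acomm wedge x y = 0.
Proof.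
move=> ex ey; have := congr1 phi (inL_anticomm (e_inL n) (e_inL k)).
rewrite !phi_wedge (linfunN phi_lin) phi_wedge => phi_anti.
apply: (gsubst_basis_inj two e_basis); rewrite gsubst0 /acomm gsubstD.
by rewrite !(gsubst_wedge two _ e_inL) ex ey phi_anti addNr.
Qed.

Lemma perturbed_gen_monom n : gmonom X (s n) = << seq_fset tt (s n) >>.
Proof.
apply: (gsubst_basis_inj two e_basis).
rewrite (gmonom_morph _ (gsubst_wedge two _ e_inL) (gsubst_gone e)).
rewrite (eq_gmonom _ _ _ gsubst_perturbed_gen) -(gmonom_morph _ phi_wedge phi_gone).
rewrite (involution_affine_fixed phi_lin (phiK (e n)) (phi_e n) (c_neq0 n)).
by rewrite gsubstU gmonom_set_seq.
Qed.

Lemma pullback_fixed_gen : (forall n, s n != [::]) -> exists j, phi (e j) = e j.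
Proof.
move=> s_neq_nil.
have [j Xj] := perturbed_gen_fixed two c_neq0 s_sorted s_neq_nil perturbed_gen_monom
  (fun n k => acomm_pullback (gsubst_perturbed_gen n) (gsubst_perturbed_gen k)).
by exists j; rewrite -gsubst_perturbed_gen Xj gsubst_ggen.
Qed.
End Pullback.

Local Close Scope fset_scope.

Theorem mainTheorem11 (F : fieldType) (charF0 : [pchar F] =i pred0) :
  ~ exists phi : Grass F -> Grass F,
      type4 phi /\
      exists e : nat -> Grass F,
        is_basisL e /\
        forall n : nat, exists (c : F) (s : seq nat),
          [/\ c != 0, s != [::], sorted ltn s &
              phi (e n) = - e n + c *: gmonom e s].
Proof.
move=> [phi [[[phi_lin phi_gone phi_mul _] phiK phi_type4] [e [e_basis phi_e]]]].
have two : (2%:R : F) != 0 by move: (charF0 2); rewrite !inE => /negbT.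
have phi_wedge : {morph phi : a b / a *w b} by rewrite -gmul_wedge.
have /choice[cs /all_and4[c_neq0 s_neq_nil s_sorted phi_e']] : forall n,
    exists p : F * seq nat, [/\ p.1 != 0, p.2 != [::], sorted ltn p.2 &
      phi (e n) = - e n + p.1 *: gmonom e p.2].
  by move=> n; have [c [s spec]] := phi_e n; exists (c, s).
have [j] := pullback_fixed_gen two phi_lin phi_wedge phi_gone phiK e_basis c_neq0 s_sorted
  phi_e' s_neq_nil.
by case: (phi_type4 e e_basis j).
Qed.
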